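(* Let $G$ be a signed digraph none of whose connected components is a signed cycle. Then $\lambda(G)=\max_\ell\lambda(G_\ell)$ and $\beta(G)=\max_\ell\beta(G_\ell)$, where $G_1,\dots,G_k$ are the connected components of $G$, and there exists a degree-bounded finite dynamical system $f:X\to X$ on $G$ such that $f^{\lambda(G)+\beta(G)}$ is a constant map.
   Context: A finite dynamical system (FDS) with $n$ components is a map $f=(f_1,\dots,f_n):X\to X$ where $X=X_1\times\cdots\times X_n$ and each $X_i$ is a nonempty finite interval of integers; $f^k$ is the $k$-fold composition. A signed digraph is a pair $G=(V,E)$ with $E\subseteq V\times V\times\{+,-\}$; $(j,i,s)\in E$ is an arc from $j$ to $i$ of sign $s$ (loops allowed; $G$ may have both a positive and a negative arc from $j$ to $i$, called parallel arcs). Write $G_i$ for the set of $j$ having an arc to $i$. In-degree $d^{\mathrm{in}}_G(i)$ and out-degree $d^{\mathrm{out}}_G(i)$ count arcs entering/leaving $i$, positive and negative arcs counted separately. Connected components are those of the underlying undirected graph. The underlying unsigned digraph $|G|$ has vertex set $V$ and an arc from $j$ to $i$ iff $j\in G_i$; $G$ is a signed cycle if $|G|$ is a directed cycle (through all vertices, each exactly once; a single vertex with a loop counts) and $G$ has no parallel arcs. A strong component is a maximal $U\subseteq V$ with $G[U]$ strongly connected; it is initial if no arc goes from $V\setminus U$ to $U$, trivial if $G[U]$ has one vertex and no arc. $G$ is basic if all its initial strong components are trivial; $\beta(G)=0$ if $G$ is basic, $1$ otherwise. $d_G(j,i)$ is the minimum number of arcs of a directed path from $j$ to $i$ ($0$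 if $j=i$, $\infty$ if none), $d_G(U,i)=\min_{j\in U}d_G(j,i)$, and with $\mathcal I$ the set of initial strong components, $\lambda(G)=\max_{i\in V}\min_{U\in\mathcal I}(d_G(U,i)+|U|)$. The interaction graph of an FDS $f$ is the signed digraph on $\{1,\dots,n\}$ with a positive (resp. negative) arc from $j$ to $i$ iff there is $x\in X$ with $x_j<\max(X_j)$ and $f_i(x+e_j)-f_i(x)$ positive (resp. negative), $e_j$ the $j$-th unit vector; $f$ is an FDS on $G$ if $G$ is its interaction graph. $f$ is degree-bounded if, with $G$ its interaction graph, for every $i$: $|X_i|=2$ if $d^{\mathrm{out}}_G(i)=0<d^{\mathrm{in}}_G(i)$, and $|X_i|\le d^{\mathrm{out}}_G(i)+1$ otherwise. *)

From HB Require Import structures.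
From mathcomp Require Import all_boot all_order all_algebra.
From Stdlib Require Import ClassicalEpsilon.
Set Implicit Arguments. Unset Strict Implicit. Unset Printing Implicit Defensive.
Import Order.TTheory GRing.Theory Num.Theory.

(* A signed digraph on vertex set 'I_n : a set of arcs (j, i, s), meaning an
   arc from j to i of sign s (s = true : positive, s = false : negative). *)
Definition arcset (n : nat) := {set 'I_n * 'I_n * bool}.

Section SignedDigraph.
Variable n : nat.
Implicit Types (E : arcset n) (W U : {set 'I_n}) (i j : 'I_n).

Definition arcW W E : rel 'I_n :=
  fun j i => [&& j \in W, i \in W & ((j, i, true) \in E) || ((j, i, false) \in E)].

Definition usym E : rel 'I_n := fun x y => arcW setT E x y || arcW setT E y x.
Definition components E : {set {set 'I_n}} :=
  [set [set j | connect (usym E) i j] | i : 'I_n].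

(* G[W] is a signed cycle: |G[W]| is a directed cycle through all vertices
   of W, each exactly once (a loop on a single vertex counts), and G[W] has no
   parallel arcs. *)
Definition signed_cycle W E : Prop :=
  (exists s : seq 'I_n, [/\ s != [::], uniq s, W =i s &
      forall j i, j \in W -> i \in W -> arcW W E j i = (i == next s j)]) /\
  (forall j i, j \in W -> i \in W -> ~~ (((j, i, true) \in E) && ((j, i, false) \in E))).

Definition restr W E U : rel 'I_n := fun x y => [&& x \in U, y \in U & arcW W E x y].
Definition strongly_connected W E (U : {set 'I_n}) : bool :=
  (U != set0) && [forall j in U, forall i in U, connect (restr W E U) j i].
Definition strong_component W E U : bool :=
  (U \subset W) && maxset (fun U' => (U' \subset W) && strongly_connected W E U') U.
Definition initial_sc W E U : bool :=
  strong_component W E U &&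
  [forall j, forall i, ((j \in W) && (j \notin U) && (i \in U)) ==> ~~ arcW W E j i].
Definition trivial_sc W E U : bool :=
  (#|U| == 1) && [forall j in U, forall i in U, ~~ arcW W E j i].
Definition basic W E : bool :=
  [forall U, initial_sc W E U ==> trivial_sc W E U].
Definition beta W E : nat := if basic W E then 0 else 1.

(* walks of length k in G[W] and distances, with None standing for infinity *)
Fixpoint walk W E (k : nat) (j i : 'I_n) : bool :=
  match k with
  | 0 => j == i
  | k'.+1 => [exists l, arcW W E j l && walk W E k' l i]
  end.
Definition dist W E j i : option nat :=
  match excluded_middle_informative (exists k, walk W E k j i) with
  | left H => Some (ex_minn H)
  | right _ => None
  end.

Definition omin (a b : option nat) : option nat :=
  match a, b with
  | None, _ => b | _, None => a | Some x, Some y => Some (minn x y) end.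
Definition omax (a b : option nat) : option nat :=
  match a, b with
  | Some x, Some y => Some (maxn x y) | _, _ => None end.
Definition oaddn (a : option nat) (c : nat) : option nat := omap (addn^~ c) a.

Definition distU W E U i : option nat := \big[omin/None]_(j in U) dist W E j i.
Definition lambda W E : option nat :=
  \big[omax/Some 0]_(i in W)
     \big[omin/None]_(U : {set 'I_n} | initial_sc W E U) oaddn (distU W E U i) #|U|.

(* degrees, positive and negative arcs counted separately *)
Definition dout E i : nat := #|[set a in E | a.1.1 == i]|.
Definition din E i : nat := #|[set a in E | a.1.2 == i]|.

(* finite dynamical systems: X = prod_i [lo i, hi i] (integer intervals) *)
Local Open Scope ring_scope.
Definition inX (lo hi : 'I_n -> int) (x : {ffun 'I_n -> int}) : bool :=
  [forall i, (lo i <= x i) && (x i <= hi i)].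
Definition shift (x : {ffun 'I_n -> int}) j : {ffun 'I_n -> int} :=
  [ffun k => x k + (k == j)%:R].

Definition interaction_graph_is (lo hi : 'I_n -> int)
    (f : {ffun 'I_n -> int} -> {ffun 'I_n -> int}) E : Prop :=
  forall j i (s : bool), (j, i, s) \in E <->
    exists x, [/\ inX lo hi x, x j < hi j &
      if s then 0 < f (shift x j) i - f x i else f (shift x j) i - f x i < 0].

Definition degree_bounded (lo hi : 'I_n -> int) E : Prop :=
  forall i, if ((dout E i == 0)%N && (0 < din E i)%N)
            then hi i - lo i + 1 = 2
            else hi i - lo i + 1 <= (dout E i).+1%:Z.
End SignedDigraph.

From HB Require Import structures.
From mathcomp Require Import all_boot all_order all_algebra.
From mathcomp Require Import zify.
From Stdlib Require Import ClassicalEpsilon.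
Import Order.TTheory GRing.Theory Num.Theory.
Set Implicit Arguments. Unset Strict Implicit. Unset Printing Implicit Defensive.

(* Vertex [i] gets the values [0 .. k_i - 1], where [k_i] is 3 for out-degree at least 2,
   2 for out-degree 1 or a sink with in-arcs, and 1 otherwise.  A non-source vertex takes
   one of two values according to whether all its in-neighbours pass a test, a pattern on
   their at most three values, taken from a finite table so that every in-arc is realised
   with exactly its signs.
   The system then settles along a forest.  Sources are constant from step 1.  A
   non-trivial initial strong component is not a signed cycle, so some vertex on a cycle
   has two out-arcs; its successor is given a test failing on both values this hub takes,
   and is constant from step 2.  Every other vertex has a parent settling earlier whose
   settled value its test rejects.  Settling times are thus bounded by distances from
   these seeds, which gives [lambda + beta].  The decompositions of [lambda] and [beta]
   hold because distances and initial strong components never leave a connected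
   component. *)

Definition ole (a b : option nat) : bool :=
  match a, b with
  | _, None => true | None, Some _ => false | Some x, Some y => (x <= y)%N end.

Lemma ominA : associative omin.
Proof. by case=> [a|] [b|] [c|] //=; rewrite minnA. Qed.
Lemma ominC : commutative omin.
Proof. by case=> [a|] [b|] //=; rewrite minnC. Qed.
Lemma omin0o : left_id None omin.
Proof. by case. Qed.
HB.instance Definition _ :=
  Monoid.isComLaw.Build (option nat) None omin ominA ominC omin0o.

Lemma omaxA : associative omax.
Proof. by case=> [a|] [b|] [c|] //=; rewrite maxnA. Qed.
Lemma omaxC : commutative omax.
Proof. by case=> [a|] [b|] //=; rewrite maxnC. Qed.
Lemma omax0o : left_id (Some 0%N) omax.
Proof. by case=> //= a; rewrite max0n. Qed.
HB.instance Definition _ :=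
  Monoid.isComLaw.Build (option nat) (Some 0%N) omax omaxA omaxC omax0o.

Section BigOption.
Variables (I : finType) (P : pred I) (F : I -> option nat).

Lemma ole_big_omin i : P i -> ole (\big[omin/None]_(i | P i) F i) (F i).
Proof.
move=> Pi; rewrite (bigD1 i) //=.
case: (F i) => [a|] //; case: (\big[omin/None]_(j | P j && (j != i)) F j) => [b|] //=.
exact: geq_minl.
Qed.

Lemma big_omin_attained m : \big[omin/None]_(i | P i) F i = Some m ->
  exists2 i, P i & F i = Some m.
Proof.
have: \big[omin/None]_(i | P i) F i = None \/
      exists2 i, P i & F i = \big[omin/None]_(i | P i) F i.
  apply: (big_rec (fun b => b = None \/ exists2 i, P i & F i = b)); first by left.
  move=> i b Pi [->|[j Pj <-]]; first by right; exists i => //; case: (F i).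
  right; case Fi: (F i) => [x|]; case Fj: (F j) => [y|] /=; try by exists j.
  - case: (leqP x y) => h.
      by exists i => //; rewrite Fi /= (minn_idPl h).
    by exists j => //; rewrite Fj /= (minn_idPr (ltnW h)).
  - by exists i.
by move=> [-> //|[i Pi <-] Fi]; exists i.
Qed.

Lemma big_omin_eqNone : \big[omin/None]_(i | P i) F i = None ->
  forall i, P i -> F i = None.
Proof. by move=> h i /ole_big_omin; rewrite h; case: (F i). Qed.

Lemma big_omax_Some : (forall i, P i -> exists v, F i = Some v) ->
  exists M, \big[omax/Some 0%N]_(i | P i) F i = Some M.
Proof.
move=> h; apply: (big_rec (fun b => exists M, b = Some M)); first by exists 0%N.
by move=> i b Pi [M ->]; case: (h i Pi) => v ->; exists (maxn v M).
Qed.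

Lemma big_omax_Some_le M i : \big[omax/Some 0%N]_(i | P i) F i = Some M -> P i ->
  exists2 v, F i = Some v & (v <= M)%N.
Proof.
move=> + Pi; rewrite (bigD1 i) //=.
case: (F i) => [a|] //; case: (\big[omax/Some 0%N]_(j | P j && (j != i)) F j) => [b|] //= [<-].
by exists a => //; apply: leq_maxl.
Qed.
End BigOption.

Definition arc n (E : arcset n) : rel 'I_n := arcW setT E.

Section Walks.
Variables (n : nat) (E : arcset n).
Implicit Types (W U : {set 'I_n}) (i j : 'I_n).

Lemma arcE j i : arc E j i = ((j, i, true) \in E) || ((j, i, false) \in E).
Proof. by rewrite /arc /arcW !inE. Qed.

Lemma walk_cat W a b j k i :
  walk W E a j k -> walk W E b k i -> walk W E (a + b) j i.
Proof.
elim: a j => [|a IH] j /=; first by move/eqP->.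
by case/existsP=> l /andP[jl wl] wb; apply/existsP; exists l; rewrite jl IH.
Qed.

Lemma walkS_last W m j i :
  walk W E m.+1 j i -> exists2 p, walk W E m j p & arcW W E p i.
Proof.
elim: m j => [|m IH] j /=.
  by case/existsP=> l /andP[jl /eqP<-]; exists j.
case/existsP=> l /andP[jl wl]; case: (IH l wl) => p wp pi.
by exists p => //; apply/existsP; exists l; rewrite jl.
Qed.

Lemma dist_Some W j i m : dist W E j i = Some m ->
  walk W E m j i /\ forall k, walk W E k j i -> (m <= k)%N.
Proof.
rewrite /dist; case: excluded_middle_informative => // H [<-].
by case: (ex_minnP H).
Qed.

Lemma dist_None W j i : dist W E j i = None -> forall k, ~~ walk W E k j i.
Proof.
rewrite /dist; case: excluded_middle_informative => // H _ k.
by apply/negP=> w; apply: H; exists k.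
Qed.

Lemma dist_le_walk W k j i :
  walk W E k j i -> exists2 m, dist W E j i = Some m & (m <= k)%N.
Proof.
move=> w; case dji: (dist W E j i) => [m|]; last by move: (dist_None dji k); rewrite w.
by exists m => //; case: (dist_Some dji) => _; apply.
Qed.

Lemma eq_dist W W' j i : (forall k, walk W E k j i = walk W' E k j i) ->
  dist W E j i = dist W' E j i.
Proof.
move=> h; case d1: (dist W E j i) => [m|].
  case: (dist_Some d1) => w1 m1; rewrite h in w1.
  case: (dist_le_walk w1) => m' d2 le'; rewrite d2; congr Some.
  case: (dist_Some d2) => w2 _; rewrite -h in w2.
  by apply/eqP; rewrite eqn_leq le' m1.
case d2: (dist W' E j i) => [m|] //.
by case: (dist_Some d2) => w2 _; move: (dist_None d1 m); rewrite h w2.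
Qed.

Lemma dist_refl W j : dist W E j j = Some 0%N.
Proof.
have w : walk W E 0 j j by rewrite /= eqxx.
by case: (dist_le_walk w) => m -> ; rewrite leqn0 => /eqP->.
Qed.

Lemma dist_gt0 W j i m : dist W E j i = Some m -> j != i -> (0 < m)%N.
Proof. by case/dist_Some=> w _; case: m w => //= /eqP->; rewrite eqxx. Qed.

Lemma walk_connect k j i : walk setT E k j i -> connect (arc E) j i.
Proof.
elim: k j => [|k IH] j /=; first by move/eqP->.
by case/existsP=> l /andP[jl wl]; apply: connect_trans (connect1 jl) (IH _ wl).
Qed.

Lemma path_walk (e : rel 'I_n) a p : subrel e (arc E) -> path e a p ->
  walk setT E (size p) a (last a p).
Proof.
move=> sub; elim: p a => [|b p IH] a /=; first by rewrite eqxx.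
by case/andP=> ab pb; apply/existsP; exists b; rewrite IH // andbT; apply: sub.
Qed.

Lemma connect_walk j i : connect (arc E) j i -> exists k, walk setT E k j i.
Proof. by case/connectP=> p pp ->; exists (size p); apply: (@path_walk (arc E)). Qed.

End Walks.

Section StrongComponents.
Variables (n : nat) (E : arcset n).
Implicit Types (U : {set 'I_n}) (i j a b : 'I_n).

Definition scc j : {set 'I_n} := [set k | connect (arc E) j k && connect (arc E) k j].
Definition source u := [forall j, ~~ arc E j u].

Lemma restr_arc U : subrel (restr setT E U) (arc E).
Proof. by move=> x y /and3P[]. Qed.

Lemma connect_restr_arc U a b : connect (restr setT E U) a b -> connect (arc E) a b.
Proof. by apply: connect_sub => x y /restr_arc; apply: connect1. Qed.

Lemma initial_sc_pred U a b : initial_sc setT E U -> arc E a b -> b \in U -> a \in U.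
Proof.
case/andP=> _ /forallP h ab bU; apply/negPn/negP=> aU.
move: (h a) => /forallP /(_ b) /implyP.
by rewrite in_setT aU bU => /(_ isT) /negP; apply.
Qed.

Lemma initial_sc_connect U a b :
  initial_sc setT E U -> connect (arc E) a b -> b \in U -> a \in U.
Proof.
move=> iU /connectP[p pp ->]; elim: p a pp => [|c p IH] a //= /andP[ac pc] lU.
exact: (initial_sc_pred iU ac (IH _ pc lU)).
Qed.

Lemma sc_connect U a b : strongly_connected setT E U -> a \in U -> b \in U ->
  connect (arc E) a b.
Proof.
case/andP=> _ /forallP h aU bU; move: (h a); rewrite aU => /forallP /(_ b).
by rewrite bU /=; apply: connect_restr_arc.
Qed.

Lemma connect_restr U a b : a \in U -> connect (arc E) a b ->
  (forall x, connect (arc E) a x -> connect (arc E) x b -> x \in U) ->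
  connect (restr setT E U) a b.
Proof.
move=> aU /connectP[p pp ->]; elim: p a aU pp => [|c p IH] a aU //= /andP[ac pc] h.
have cU : c \in U by apply: h; [exact: connect1|apply/connectP; exists p].
apply: (connect_trans (connect1 _) (IH c cU pc _)); first by rewrite /restr aU cU.
by move=> x cx xb; apply: h => //; apply: connect_trans (connect1 ac) cx.
Qed.

Lemma scc_refl j : j \in scc j.
Proof. by rewrite inE connect0. Qed.

Lemma sc_scc j : strongly_connected setT E (scc j).
Proof.
apply/andP; split; first by apply/set0Pn; exists j; apply: scc_refl.
apply/forallP=> a; apply/implyP=> aS; apply/forallP=> b; apply/implyP=> bS.
move: aS bS; rewrite !inE => /andP[ja aj] /andP[jb bj].
apply: connect_restr; rewrite ?inE ?ja ?aj //; first exact: connect_trans aj jb.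
by move=> x ax xb; rewrite inE (connect_trans ja ax) (connect_trans xb bj).
Qed.

Lemma sc_sub_scc U j : strongly_connected setT E U -> j \in U -> U \subset scc j.
Proof.
move=> sU jU; apply/subsetP=> x xU.
by rewrite inE (sc_connect sU jU xU) (sc_connect sU xU jU).
Qed.

Lemma strong_component_scc j : strong_component setT E (scc j).
Proof.
rewrite /strong_component subsetT /=; apply/maxsetP; split.
  by rewrite subsetT sc_scc.
move=> B /andP[_ sB] sub; apply/eqP; rewrite eqEsubset sub andbT.
by apply: sc_sub_scc => //; apply: (subsetP sub); apply: scc_refl.
Qed.

Lemma strong_component_sc U : strong_component setT E U -> strongly_connected setT E U.
Proof. by case/andP=> _ /maxsetp /andP[]. Qed.

Lemma initial_sc_sc U : initial_sc setT E U -> strongly_connected setT E U.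
Proof. by case/andP=> /strong_component_sc. Qed.

(* An ancestor [j] of [i] with the fewest ancestors lies in an initial strong component. *)
Lemma initial_sc_reaches i :
  exists U, exists2 j, initial_sc setT E U & j \in U /\ connect (arc E) j i.
Proof.
pose anc j := [set k | connect (arc E) k j].
case: (@arg_minnP _ i (fun j => connect (arc E) j i) (fun j => #|anc j|) (connect0 _ i)).
move=> j ji jmin; exists (scc j), j; last by rewrite scc_refl.
rewrite /initial_sc strong_component_scc /=; apply/forallP=> a; apply/forallP=> b.
apply/implyP=> /andP[/andP[_ aS] bS]; apply/negP=> ab.
move: bS; rewrite inE => /andP[jb bj].
have aj : connect (arc E) a j := connect_trans (connect1 ab) bj.
have ja : ~~ connect (arc E) j a by apply: contra aS => ja; rewrite inE ja aj.
have : anc a \proper anc j.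
  rewrite properE; apply/andP; split.
    by apply/subsetP=> x; rewrite !inE => xa; apply: connect_trans xa aj.
  by apply/subsetPn; exists j; rewrite !inE ?connect0.
by move/proper_card; rewrite ltnNge jmin // (connect_trans aj ji).
Qed.

Lemma path_restr_all U a p : path (restr setT E U) a p -> all (mem U) p.
Proof.
by elim: p a => [|c p IH] a //= /andP[/and3P[_ cU _] pc]; rewrite cU (IH c).
Qed.

Lemma sc_walk_lt_card U r j : strongly_connected setT E U -> r \in U -> j \in U ->
  exists2 k, walk setT E k r j & (k < #|U|)%N.
Proof.
case/andP=> _ /forallP h rU jU; move: (h r); rewrite rU => /forallP /(_ j).
rewrite jU /= => /connectP[p pp ->]; case: (shortenP pp) => p' pp' up' _.
exists (size p'); first exact: path_walk (@restr_arc U) pp'.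
have sub : {subset r :: p' <= enum U}.
  move=> x; rewrite mem_enum inE => /orP[/eqP->//|xp].
  by have /allP := path_restr_all pp'; apply.
by have := uniq_leq_size up' sub; rewrite -cardE.
Qed.

Lemma trivial_initial_source U : initial_sc setT E U -> trivial_sc setT E U ->
  exists2 u, U = [set u] & source u.
Proof.
move=> iU /andP[/cards1P[u Uu] /forallP noloop]; subst U; exists u => //.
apply/forallP=> j; case: (eqVneq j u) => [->|ju].
  by move: (noloop u) => /implyP; rewrite set11 => /(_ isT) /forallP /(_ u); rewrite set11.
by apply/negP=> ab; move: (initial_sc_pred iU ab (set11 u)); rewrite inE (negbTE ju).
Qed.

End StrongComponents.

Section OutDegree.
Variables (n : nat) (E : arcset n).
Implicit Types (i j q r : 'I_n).

Lemma dout_gt1 q r r' (s s' : bool) : (q, r, s) \in E -> (q, r', s') \in E ->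
  (r, s) != (r', s') -> (1 < dout E q)%N.
Proof.
move=> h1 h2 d; apply/card_gt1P; exists (q, r, s), (q, r', s').
rewrite !inE h1 h2 /= eqxx; split=> //.
by apply: contra d => /eqP [-> ->].
Qed.

Lemma dout_gt0 q r : arc E q r -> (0 < dout E q)%N.
Proof.
rewrite arcE => h; apply/card_gt0P.
by case/orP: h => h; [exists (q, r, true)|exists (q, r, false)]; rewrite !inE h /=.
Qed.

Lemma din_gt0 q r : arc E q r -> (0 < din E r)%N.
Proof.
rewrite arcE => h; apply/card_gt0P.
by case/orP: h => h; [exists (q, r, true)|exists (q, r, false)]; rewrite !inE h /=.
Qed.

Lemma both_signs_dout_gt1 j i :
  (j, i, true) \in E -> (j, i, false) \in E -> (1 < dout E j)%N.
Proof. by move=> h1 h2; apply: (dout_gt1 h1 h2); rewrite xpair_eqE eqxx. Qed.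

Lemma dout_le1_arc_uniq q r r' :
  (dout E q <= 1)%N -> arc E q r -> arc E q r' -> r = r'.
Proof.
move=> d; rewrite !arcE => h1 h2; apply/eqP/negPn/negP=> ne.
suff : (1 < dout E q)%N by rewrite ltnNge d.
by case/orP: h1 => h1; case/orP: h2 => h2; apply: (dout_gt1 h1 h2);
  apply: contra ne => /eqP [->].
Qed.

End OutDegree.

Definition hub n (E : arcset n) q :=
  (1 < dout E q)%N && [exists r, arc E q r && connect (arc E) r q].

Section OutDegreeOne.
Variables (n : nat) (E : arcset n) (U : {set 'I_n}).
Hypotheses (iU : initial_sc setT E U) (ntU : ~~ trivial_sc setT E U).
Implicit Types (i j q r : 'I_n).

Lemma initial_sc_out_arc q : q \in U -> exists2 r, arc E q r & r \in U.
Proof.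
move=> qU; have sU := initial_sc_sc iU.
case: (eqVneq #|U| 1%N) => [/eqP/cards1P[u Uu]|c1].
  subst U; move: qU; rewrite inE => /eqP->.
  move: ntU; rewrite /trivial_sc cards1 /= => /forallPn[x].
  rewrite negb_imply inE => /andP[/eqP-> /forallPn[y]].
  by rewrite negb_imply negbK inE => /andP[/eqP-> uu]; exists u; rewrite ?set11.
have /card_gt1P[x [y [xU yU xy]]] : (1 < #|U|)%N.
  by rewrite ltn_neqAle eq_sym c1 /=; apply/card_gt0P; exists q.
have [v vU vq] : exists2 v, v \in U & v != q.
  by case: (eqVneq x q) => [xq|]; [exists y; rewrite // -xq eq_sym|exists x].
case/andP: sU => _ /forallP /(_ q); rewrite qU => /forallP /(_ v); rewrite vU /=.
case/connectP=> [[|c p]] /=; first by move=> _ vq'; move: vq; rewrite vq' eqxx.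
by case/andP=> /and3P[_ cU qc] _ _; exists c.
Qed.

Hypothesis dout_le1 : forall q, q \in U -> (dout E q <= 1)%N.

Let succ q := odflt q [pick r | arc E q r].

Let succ_arc q : q \in U -> arc E q (succ q) /\ succ q \in U.
Proof.
move=> qU; case: (initial_sc_out_arc qU) => r qr rU; rewrite /succ.
case: pickP => [r' qr' /=|/(_ r)]; last by rewrite qr.
by rewrite -(dout_le1_arc_uniq (dout_le1 qU) qr qr').
Qed.

Let arc_succ q r : q \in U -> arc E q r -> r = succ q.
Proof.
move=> qU qr; case: (succ_arc qU) => qs _.
exact: dout_le1_arc_uniq (dout_le1 qU) qr qs.
Qed.

Let fconnect_succ q x : q \in U -> fconnect succ q x = (x \in U).
Proof.
move=> qU; apply/idP/idP.
  move/connectP=> [p pp ->]; elim: p q pp qU => [|c p IH] q //= /andP[/eqP qc pc] qU.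
  by apply: IH pc _; rewrite -qc; case: (succ_arc qU).
move=> xU; have /andP[_ /forallP /(_ q)] := initial_sc_sc iU.
rewrite qU => /forallP /(_ x); rewrite xU /=; apply: connect_sub.
move=> a b /and3P[aU _ ab]; apply: connect1.
by rewrite /= /frel -(arc_succ aU ab).
Qed.

(* No arc leaves [U] (out-degree one) and none enters it (initiality). *)
Lemma initial_sc_component q : q \in U -> U = [set j | connect (usym E) q j].
Proof.
move=> qU; have closed a b : a \in U -> usym E a b -> b \in U.
  move=> aU /orP[ab|ba]; last exact: initial_sc_pred iU ba aU.
  by rewrite (arc_succ aU ab); case: (succ_arc aU).
apply/setP=> x; rewrite inE; apply/idP/idP => [xU|].
  apply: connect_sub (sc_connect (initial_sc_sc iU) qU xU).
  by move=> a b ab; apply: connect1; apply/orP; left.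
move=> /connectP[p pp ->]; elim: p q pp qU => [|c p IH] a //= /andP[ac pc] aU.
exact: IH pc (closed a c aU ac).
Qed.

Lemma initial_sc_signed_cycle : signed_cycle U E.
Proof.
case/andP: (initial_sc_sc iU) => /set0Pn[q0 q0U] _.
split; last first.
  move=> j i jU _; apply/negP=> /andP[h1 h2].
  by have := both_signs_dout_gt1 h1 h2; rewrite ltnNge dout_le1.
have cyc : fcycle succ (orbit succ q0).
  by rewrite -fconnect_f fconnect_succ //; case: (succ_arc q0U).
exists (orbit succ q0); split.
- by apply/eqP=> h; move: (in_orbit succ q0); rewrite h.
- exact: orbit_uniq.
- by move=> x; rewrite -fconnect_orbit fconnect_succ.
move=> j i jU iU'.
have -> : arcW U E j i = arc E j i by rewrite /arc /arcW jU iU' !in_setT.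
have jo : j \in orbit succ q0 by rewrite -fconnect_orbit fconnect_succ.
have := next_cycle cyc jo; rewrite /= /frel => /eqP <-.
apply/idP/idP => [ji|/eqP->]; first by rewrite (arc_succ jU ji).
by case: (succ_arc jU).
Qed.

End OutDegreeOne.

Lemma initial_sc_hub n (E : arcset n) U :
  (forall W, W \in components E -> ~ signed_cycle W E) ->
  initial_sc setT E U -> ~~ trivial_sc setT E U -> exists2 q, q \in U & hub E q.
Proof.
move=> nc iU ntU.
have back q : q \in U -> [exists r, arc E q r && connect (arc E) r q].
  move=> qU; case: (initial_sc_out_arc iU ntU qU) => r qr rU; apply/existsP; exists r.
  by rewrite qr (sc_connect (initial_sc_sc iU) rU qU).
case: (boolP [exists q in U, 1 < dout E q]%N) => [/existsP[q /andP[qU dq]]|].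
  by exists q; rewrite // /hub dq back.
move/existsPn=> d1; exfalso.
have dout_le1 q : q \in U -> (dout E q <= 1)%N.
  by move=> qU; move: (d1 q); rewrite qU ltnNge negbK.
case/andP: (initial_sc_sc iU) => /set0Pn[q0 q0U] _.
apply: (nc U); last exact: initial_sc_signed_cycle.
by rewrite (initial_sc_component iU ntU dout_le1 q0U); apply/imsetP; exists q0.
Qed.

Definition lambda_at n (W : {set 'I_n}) (E : arcset n) i : option nat :=
  \big[omin/None]_(U : {set 'I_n} | initial_sc W E U) oaddn (distU W E U i) #|U|.

Section ConnectedComponents.
Variables (n : nat) (E : arcset n).
Implicit Types (U W : {set 'I_n}) (i j a b : 'I_n).

Definition ucomp i : {set 'I_n} := [set j | connect (usym E) i j].

Lemma connect_usym_sym : connect_sym (usym E).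
Proof. by apply: sym_connect_sym => x y; rewrite /usym orbC. Qed.

Lemma ucomp_refl i : i \in ucomp i.
Proof. by rewrite inE connect0. Qed.

Lemma ucomp_eq i j : j \in ucomp i -> ucomp j = ucomp i.
Proof.
rewrite inE => ij; apply/setP=> x; rewrite !inE; apply/idP/idP => h.
  exact: connect_trans ij h.
by rewrite connect_usym_sym in ij; apply: connect_trans ij h.
Qed.

Lemma componentsP W : reflect (exists i, W = ucomp i) (W \in components E).
Proof. by apply: (iffP imsetP) => [[i _ ->]|[i ->]]; exists i. Qed.

Lemma ucomp_connect i a b : connect (arc E) a b -> (a \in ucomp i) = (b \in ucomp i).
Proof.
have /connect_sub ab_usym : subrel (arc E) (connect (usym E)).
  by move=> x y xy; apply: connect1; apply/orP; left.
move/ab_usym=> ab; rewrite !inE; apply/idP/idP => h; first exact: connect_trans h ab.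
by rewrite connect_usym_sym in ab; apply: connect_trans h ab.
Qed.

Lemma ucomp_arc i a b : arc E a b -> (a \in ucomp i) = (b \in ucomp i).
Proof. by move/connect1; apply: ucomp_connect. Qed.

Lemma sc_sub_ucomp i U j :
  strongly_connected setT E U -> j \in U -> j \in ucomp i -> U \subset ucomp i.
Proof.
by move=> sU jU jW; apply/subsetP=> u uU; rewrite -(ucomp_connect i (sc_connect sU jU uU)).
Qed.

Section OneComponent.
Variable i0 : 'I_n.
Local Notation W := (ucomp i0).

Lemma arcW_ucomp j l : j \in W -> arcW W E j l = arc E j l.
Proof.
move=> jW; rewrite /arc /arcW jW !in_setT /=; case: (boolP (l \in W)) => //= lW.
by apply/esym/negbTE; apply: contra lW => jl; rewrite -(@ucomp_arc i0 j l) // arcE.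
Qed.

Lemma walk_ucomp k j i : j \in W -> walk W E k j i = walk setT E k j i.
Proof.
elim: k j => [|k IH] j jW //=; apply: eq_existsb => l.
rewrite arcW_ucomp //; change (arcW setT E j l) with (arc E j l).
by case: (boolP (arc E j l)) => //= jl; rewrite IH // -(ucomp_arc i0 jl).
Qed.

Lemma dist_ucomp j i : j \in W -> dist W E j i = dist setT E j i.
Proof. by move=> jW; apply: eq_dist => k; rewrite walk_ucomp. Qed.

Lemma sc_ucomp U : U \subset W -> strongly_connected W E U = strongly_connected setT E U.
Proof.
move=> sub; rewrite /strongly_connected; congr (_ && _).
apply: eq_forallb_in => x _; apply: eq_forallb_in => y _; apply: eq_connect => a b.
rewrite /restr; case: (boolP (a \in U)) => //= aU; case: (boolP (b \in U)) => //= bU.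
by rewrite arcW_ucomp // (subsetP sub).
Qed.

Lemma strong_component_ucomp U :
  strong_component W E U = (U \subset W) && strong_component setT E U.
Proof.
rewrite /strong_component; case: (boolP (U \subset W)) => //= sub; rewrite subsetT /=.
rewrite (@maxset_eq _ (fun U' => (U' \subset W) && strongly_connected W E U')
   (fun U' => (U' \subset W) && strongly_connected setT E U')); last first.
  by move=> U' /=; case: (boolP (U' \subset W)) => //= s'; rewrite sc_ucomp.
apply/maxsetP/maxsetP => [[/andP[_ sU] mx]|[/andP[_ sU] mx]].
  split; first by rewrite subsetT.
  move=> B /andP[_ sB] UB; apply: mx => //; rewrite sB andbT.
  case/andP: sU => /set0Pn[u uU] _.
  by apply: (sc_sub_ucomp sB (subsetP UB u uU)); apply: (subsetP sub).
split; first by rewrite sub.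
by move=> B /andP[_ sB] UB; apply: mx => //; rewrite subsetT.
Qed.

Lemma initial_sc_ucomp U : initial_sc W E U = (U \subset W) && initial_sc setT E U.
Proof.
rewrite /initial_sc strong_component_ucomp; case: (boolP (U \subset W)) => //= sub.
case: (strong_component setT E U) => //=.
apply/forallP/forallP => h j; apply/forallP=> i;
  apply/implyP=> /andP[/andP[jW jU] iU]; move: (h j) => /forallP /(_ i) /implyP.
- case: (boolP (j \in W)) => jW' /=; first by rewrite jU iU arcW_ucomp // => /(_ isT).
  move=> _; apply/negP=> ji; move: jW'.
  by rewrite (ucomp_arc i0 ji) (subsetP sub i iU).
- by rewrite jU iU in_setT arcW_ucomp // => /(_ isT).
Qed.

Lemma trivial_sc_ucomp U : U \subset W -> trivial_sc W E U = trivial_sc setT E U.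
Proof.
move=> sub; rewrite /trivial_sc; congr (_ && _).
apply: eq_forallb_in => j jU; apply: eq_forallb_in => i iU.
by rewrite arcW_ucomp // (subsetP sub).
Qed.

Lemma distU_outside U i : i \in W -> initial_sc setT E U -> ~~ (U \subset W) ->
  distU setT E U i = None.
Proof.
move=> iW iU nsub; rewrite /distU big1 // => j jU.
case dji: (dist setT E j i) => [m|] //; case: (dist_Some dji) => w _.
have jW : j \in W by rewrite (ucomp_connect i0 (walk_connect w)).
by move: nsub; rewrite (sc_sub_ucomp (initial_sc_sc iU) jU jW).
Qed.

Lemma lambda_at_ucomp i : i \in W -> lambda_at W E i = lambda_at setT E i.
Proof.
move=> iW; rewrite /lambda_at [RHS](bigID (fun U => U \subset W)) /=.
rewrite [X in omin _ X]big1; last by move=> U /andP[iU nsub]; rewrite distU_outside.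
rewrite ominC omin0o; apply: eq_big => U; first by rewrite initial_sc_ucomp andbC.
rewrite initial_sc_ucomp => /andP[sub _]; congr oaddn; apply: eq_bigr => j jU.
by rewrite dist_ucomp // (subsetP sub).
Qed.

End OneComponent.

Lemma lambda_components :
  lambda setT E = \big[omax/Some 0%N]_(W in components E) lambda W E.
Proof.
rewrite /lambda (partition_big ucomp (mem (components E))); last first.
  by move=> i _; apply/componentsP; exists i.
apply: eq_bigr => W /componentsP[i0 ->]; apply: eq_big => i.
  by rewrite in_setT /=; apply/eqP/idP => [<-|/ucomp_eq//]; apply: ucomp_refl.
by move=> /andP[_ /eqP <-]; rewrite -[RHS]/(lambda_at _ _ _) lambda_at_ucomp // ucomp_refl.
Qed.

Lemma basic_components : basic setT E = [forall W in components E, basic W E].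
Proof.
apply/forallP/forallP => h W.
  apply/implyP=> /componentsP[i0 ->]; apply/forallP=> U; apply/implyP.
  rewrite initial_sc_ucomp => /andP[sub iU]; rewrite trivial_sc_ucomp //.
  by move: (h U); rewrite iU.
apply/implyP=> iU; case/andP: (initial_sc_sc iU) => /set0Pn[u uU] _.
have sub : W \subset ucomp u by apply: (sc_sub_ucomp (initial_sc_sc iU) uU (ucomp_refl u)).
have uC : ucomp u \in components E by apply/componentsP; exists u.
move: (h (ucomp u)); rewrite uC => /forallP /(_ W).
by rewrite initial_sc_ucomp sub iU /= trivial_sc_ucomp.
Qed.

Lemma beta_components : beta setT E = (\max_(W in components E) beta W E)%N.
Proof.
rewrite /beta basic_components; case: (boolP [forall W in _, _]) => [/forallP h|/forallPn[W]].
  apply/esym/eqP; rewrite -leqn0; apply/bigmax_leqP => W WC.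
  by move: (h W); rewrite WC /= => ->.
rewrite negb_imply => /andP[WC nb]; apply/eqP; rewrite eqn_leq; apply/andP; split.
  by apply: (leq_trans _ (leq_bigmax_cond _ WC)); rewrite (negbTE nb).
by apply/bigmax_leqP => W' _; case: (basic W' E).
Qed.

End ConnectedComponents.

(* A pattern is a test on the values 0, 1, 2 of an in-neighbour; [switches k A o] says
   that among the first [k] values it changes to [o] between two consecutive ones. *)
Definition pattern := (bool * bool * bool)%type.

Definition pat_at (A : pattern) (v : nat) : bool :=
  match v with 0 => A.1.1 | 1 => A.1.2 | 2 => A.2 | _ => false end.

Definition switches k (A : pattern) (o : bool) :=
  ((1 < k)%N && (pat_at A 1 == o) && (pat_at A 0 != o)) ||
  ((2 < k)%N && (pat_at A 2 == o) && (pat_at A 1 != o)).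

Definition rejects k z (A : pattern) := ~~ (z < k)%N || ~~ pat_at A z.

Definition fits k up down z1 z2 (A : pattern) :=
  [&& switches k A true == up, switches k A false == down,
      rejects k z1 A & rejects k z2 A].

Definition all_patterns : seq pattern :=
  [seq (ab, c) | ab <- [seq (a, b) | a <- [:: false; true], b <- [:: false; true]],
                 c <- [:: false; true]].

Definition fits_some k up down z1 z2 := has (fits k up down z1 z2) all_patterns.

Definition choose_pattern k up down z1 z2 : pattern :=
  nth (true, true, true) all_patterns (find (fits k up down z1 z2) all_patterns).

Lemma choose_patternP k up down z1 z2 :
  fits_some k up down z1 z2 -> fits k up down z1 z2 (choose_pattern k up down z1 z2).
Proof. exact: nth_find. Qed.

Lemma rejects_pat_at k z A : rejects k z A -> (z < k)%N -> pat_at A z = false.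
Proof. by case/orP=> [/negP//|/negbTE]. Qed.

Lemma switchesP k A o : (k <= 3)%N ->
  reflect (exists v, [/\ (v.+1 < k)%N, pat_at A v.+1 == o & pat_at A v != o])
          (switches k A o).
Proof.
move=> k3; apply: (iffP orP) => [[]/andP[/andP[? ?] ?]|[[|[|v]] [/= vk h1 h2]]].
- by exists 0%N.
- by exists 1%N.
- by left; rewrite vk h1 h2.
- by right; rewrite vk h1 h2.
- by move: (leq_trans vk k3).
Qed.

Definition branching_size (b : bool) : nat := if b then 3 else 2.

Lemma fits_parent (b up down : bool) z :
  (z < branching_size b)%N -> up || down -> up && down ==> b ->
  fits_some (branching_size b) up down z z || fits_some (branching_size b) down up z z.
Proof. by case: b; case: up; case: down; case: z => [|[|[|z]]]. Qed.

Lemma fits_unconstrained (b up down : bool) : up || down -> up && down ==> b ->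
  fits_some (branching_size b) up down 3 3 && fits_some (branching_size b) down up 3 3.
Proof. by case: b; case: up; case: down. Qed.

Lemma fits_hub (up down : bool) : up || down ->
  fits_some 3 up down 0 (if up && down then 2 else 1) ||
  fits_some 3 down up 0 (if up && down then 2 else 1).
Proof. by case: up; case: down. Qed.

Section Construction.
Variables (n : nat) (E : arcset n).
Implicit Types (i j p q r s : 'I_n).

Definition dsize i : nat :=
  if (1 < dout E i)%N then 3 else if (dout E i == 1)%N || (0 < din E i)%N then 2 else 1.

Definition hub_succ q := odflt q [pick r | arc E q r && connect (arc E) r q].
Definition special r := [exists q, hub E q && (hub_succ q == r)].
Definition hub_of r := odflt r [pick q | hub E q && (hub_succ q == r)].

Definition seed i := source E i || special i.
Definition seed_delay s : nat := if source E s then 1 else 2.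
Definition settle i : option nat :=
  \big[omin/None]_(s | seed s) oaddn (dist setT E s i) (seed_delay s).

Definition olt (a b : option nat) :=
  match a, b with Some x, Some y => (x < y)%N | _, _ => false end.
Definition parent i := odflt i [pick p | arc E p i && olt (settle p) (settle i)].

Definition pos j i := (j, i, true) \in E.
Definition neg j i := (j, i, false) \in E.

(* The active value [top i] is 2 only for a hub whose successor it influences with
   both signs: its successor then needs a pattern that is true exactly at 1. *)
Definition top i : nat :=
  if dsize i == 3 then (if [&& hub E i, pos i (hub_succ i) & neg i (hub_succ i)] then 2 else 1)
  else (dsize i).-1.

Definition out i (o b : bool) : nat := if b == o then top i else 0.

Definition parent_fits i cp :=
  fits_some (dsize (parent i)) (pos (parent i) i) (neg (parent i) i) cp cp.
Definition hub_fits r :=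
  fits_some (dsize (hub_of r)) (pos (hub_of r) r) (neg (hub_of r) r) 0 (top (hub_of r)).

(* The orientation says whether passing the test yields [top i] or [0].  It is chosen so
   that a pattern with the required signs rejects the value at which the parent settles;
   that value depends on the parent's orientation, so the choice recurses along decreasing
   settling times, with fuel [settle i]. *)
Fixpoint orient_upto (m : nat) i : bool :=
  match m with
  | 0 => true
  | m'.+1 =>
    if source E i then true else if special i then hub_fits i
    else parent_fits i (out (parent i) (orient_upto m' (parent i)) false)
  end.
Definition orient i := orient_upto (odflt 0 (settle i)) i.
Definition final i := out i (orient i) false.

(* [3] is a value no vertex takes, so [(3, 3)] forbids nothing. *)
Definition forbidden i j : nat * nat :=
  if special i && (j == hub_of i) then (0, top j)
  else if ~~ seed i && (j == parent i) then (final j, final j) else (3, 3).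
Definition wanted i j : bool * bool :=
  if orient i then (pos j i, neg j i) else (neg j i, pos j i).
Definition arc_pattern i j : pattern :=
  choose_pattern (dsize j) (wanted i j).1 (wanted i j).2 (forbidden i j).1 (forbidden i j).2.
Definition accepts i j (v : int) : bool :=
  if arc E j i then pat_at (arc_pattern i j) `|v|%N else true.

Definition fds (x : {ffun 'I_n -> int}) : {ffun 'I_n -> int} :=
  [ffun i => if source E i then 0%R
             else Posz (out i (orient i) [forall j, accepts i j (x j)])].
Definition lo (i : 'I_n) : int := 0%R.
Definition hi (i : 'I_n) : int := Posz (dsize i).-1.

Lemma seed_delay_gt0 s : (0 < seed_delay s)%N.
Proof. by rewrite /seed_delay; case: ifP. Qed.

Lemma settle_attained i t : settle i = Some t ->
  exists2 s, seed s & exists2 d, dist setT E s i = Some d & t = (d + seed_delay s)%N.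
Proof.
case/big_omin_attained=> s sd; case dsi: (dist setT E s i) => [d|] //= [<-].
by exists s => //; exists d.
Qed.

Lemma settle_le s i d : seed s -> dist setT E s i = Some d ->
  exists2 t, settle i = Some t & (t <= d + seed_delay s)%N.
Proof.
move=> ss dsi; have := ole_big_omin (fun s => oaddn (dist setT E s i) (seed_delay s)) ss.
by rewrite /settle; case: (\big[omin/None]_(s | seed s) _) => [t|]; rewrite dsi //=; exists t.
Qed.

Lemma settle_gt0 i t : settle i = Some t -> (0 < t)%N.
Proof. by case/settle_attained=> s _ [d _ ->]; rewrite addnC ltn_addr // seed_delay_gt0. Qed.

Lemma special_hub_of r : special r -> hub E (hub_of r) /\ hub_succ (hub_of r) = r.
Proof.
case/existsP=> q0 h0; rewrite /hub_of; case: pickP => [q /andP[hq /eqP rq]|/(_ q0)] //=.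
by rewrite h0.
Qed.

Lemma hub_succ_spec q : hub E q -> arc E q (hub_succ q) /\ connect (arc E) (hub_succ q) q.
Proof.
case/andP=> _ /existsP[r0 h0]; rewrite /hub_succ; case: pickP => [r /andP[]|/(_ r0)] //=.
by rewrite h0.
Qed.

Lemma hub_of_arc r : special r -> arc E (hub_of r) r.
Proof. by case/special_hub_of=> h e; have := (hub_succ_spec h).1; rewrite e. Qed.

Lemma special_not_source r : special r -> ~~ source E r.
Proof. by move/hub_of_arc=> h; apply/negP=> /forallP /(_ (hub_of r)); rewrite h. Qed.

Lemma hub_not_source q : hub E q -> ~~ source E q.
Proof.
move=> hq; case: (hub_succ_spec hq) => qr /connectP[p pp e].
apply/negP=> /forallP sq; case/lastP: p pp e => [|p x] /=.
  by move=> _ e; move: (sq q); rewrite [X in arc E q X]e qr.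
rewrite last_rcons rcons_path => /andP[_ h] e; rewrite -e in h.
by move: (sq (last (hub_succ q) p)); rewrite h.
Qed.

Lemma settle_special r t : special r -> settle r = Some t -> (1 < t)%N.
Proof.
move=> sr /settle_attained[s ss [d dd ->]].
case: (eqVneq s r) => [->|sr'].
  by rewrite /seed_delay (negbTE (special_not_source sr)) addn2.
exact: leq_add (dist_gt0 dd sr') (seed_delay_gt0 s).
Qed.

(* The last arc of a shortest walk from the seed realising [settle i]. *)
Lemma parent_spec i t : ~~ seed i -> settle i = Some t ->
  arc E (parent i) i /\ exists2 t', settle (parent i) = Some t' & (t' < t)%N.
Proof.
move=> ns ti; have [p0 a0 [t0 e0 l0]] : exists2 p, arc E p i &
    exists2 t', settle p = Some t' & (t' < t)%N.
  case/settle_attained: ti => s ss [d dd et].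
  have si : s != i by apply: contra ns => /eqP <-.
  case: d dd et (dist_gt0 dd si) => // d dd et _.
  case: (dist_Some dd) => /walkS_last[p wp pi] _.
  exists p => //; case: (dist_le_walk wp) => d' dp le'.
  case: (settle_le ss dp) => t' tp le2; exists t' => //.
  by rewrite et (leq_ltn_trans le2) // ltn_add2r ltnS.
rewrite /parent; case: pickP => [p /andP[pa]|/(_ p0)]; last by rewrite a0 e0 ti /= l0.
by rewrite ti; case: (settle p) => // t' /= lt; split=> //; exists t'.
Qed.

Lemma orient_upto_stable N i t m : settle i = Some t -> (t <= N)%N -> (t <= m)%N ->
  orient_upto m i = orient_upto t i.
Proof.
elim: N i t m => [|N IH] i t m ti tN tm; first by move: (settle_gt0 ti); rewrite leqNgt ltnS tN.
case: m tm => [|m] tm; first by move: (leq_trans (settle_gt0 ti) tm).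
have t0 := settle_gt0 ti; case: t t0 tm ti tN => // t _ tm ti tN /=.
case: (boolP (source E i)) => // nso; case: (boolP (special i)) => // nsp.
have ns : ~~ seed i by rewrite /seed (negbTE nso) (negbTE nsp).
case: (parent_spec ns ti) => _ [tp ep ltp].
have tpN : (tp <= N)%N by rewrite -ltnS (leq_trans ltp).
rewrite (IH _ _ m ep tpN) ?(IH _ _ t ep tpN) // -ltnS //.
exact: leq_trans ltp tm.
Qed.

Lemma orient_uptoE i t m : settle i = Some t -> (t <= m)%N -> orient_upto m i = orient i.
Proof. by move=> ti tm; rewrite /orient ti (orient_upto_stable ti (leqnn t)). Qed.

Lemma orient_parent i t : ~~ seed i -> settle i = Some t ->
  orient i = parent_fits i (final (parent i)).
Proof.
move=> ns ti; move: (ns); rewrite /seed negb_or => /andP[nso nsp].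
have t0 := settle_gt0 ti; rewrite /orient ti; case: t t0 ti => // t _ ti /=.
rewrite (negbTE nso) (negbTE nsp); case: (parent_spec ns ti) => _ [tp ep ltp].
by rewrite /final (orient_uptoE ep).
Qed.

Lemma orient_special r : special r -> orient r = hub_fits r.
Proof.
move=> sr; have sd : seed r by rewrite /seed sr orbT.
case: (settle_le sd (dist_refl E setT r)) => t ti _.
have t0 := settle_gt0 ti; rewrite /orient ti; case: t t0 ti => // t _ ti /=.
by rewrite (negbTE (special_not_source sr)) sr.
Qed.

Lemma dsize_out j i : arc E j i -> dsize j = branching_size (1 < dout E j)%N.
Proof.
move/dout_gt0; rewrite /dsize /branching_size; case: ifP => // h d0.
by rewrite (_ : dout E j = 1)%N //; apply/eqP; rewrite eqn_leq d0 leqNgt h.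
Qed.

Lemma dsize_gt0 i : (0 < dsize i)%N.
Proof. by rewrite /dsize; case: ifP => //; case: ifP. Qed.

Lemma dsize_le3 i : (dsize i <= 3)%N.
Proof. by rewrite /dsize; case: ifP => //; case: ifP. Qed.

Lemma dsize_in j i : arc E j i -> (1 < dsize i)%N.
Proof. by move/din_gt0=> d; rewrite /dsize; case: ifP => // _; rewrite d orbT. Qed.

Lemma top_le i : (top i <= (dsize i).-1)%N.
Proof. by rewrite /top; case: ifP => [/eqP->|//]; case: ifP. Qed.

Lemma top_gt0 i : (1 < dsize i)%N -> (0 < top i)%N.
Proof. by rewrite /top; case: ifP => [_|]; [case: ifP|case: (dsize i) => [|[|k]]]. Qed.

Lemma out_lt_dsize i o b : (out i o b < dsize i)%N.
Proof.
by rewrite /out; case: ifP => _; rewrite ?dsize_gt0 // (leq_ltn_trans (top_le i)) ?prednK ?dsize_gt0.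
Qed.

End Construction.

Arguments lo {n}.

Section Realisation.
Variables (n : nat) (E : arcset n).
Implicit Types (i j u : 'I_n) (x : {ffun 'I_n -> int}).

Lemma orient_source u : source E u -> orient E u = true.
Proof.
move=> su; rewrite /orient; case: (settle E u) => [t|] //=.
by case: t => //= t; rewrite su.
Qed.

Lemma lambda_at_finite i : exists dl, lambda_at setT E i = Some dl.
Proof.
case: (initial_sc_reaches E i) => U0 [j0 iU0 [j0U /connect_walk[k w]]].
case: (dist_le_walk w) => d0 e0 _.
case dUi: (distU setT E U0 i) => [e|]; last by move: (big_omin_eqNone dUi j0U); rewrite e0.
have := ole_big_omin (fun U => oaddn (distU setT E U i) #|U|) iU0.
by rewrite /lambda_at dUi; case: (\big[omin/None]_(U | _) _) => [y|] //= _; exists y.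
Qed.

Hypothesis no_signed_cycle : forall W, W \in components E -> ~ signed_cycle W E.

(* A trivial initial component is a source, settling after one step; otherwise the
   component contains a hub, whose chosen successor settles after two steps. *)
Lemma settle_le_lambda i dl : lambda_at setT E i = Some dl ->
  exists2 t, settle E i = Some t & (t <= dl + beta setT E)%N.
Proof.
case/big_omin_attained=> U iU; case dUi: (distU setT E U i) => [e|] //= [<-].
case/big_omin_attained: dUi => j jU dj.
case: (boolP (trivial_sc setT E U)) => [tU|ntU].
  case: (trivial_initial_source iU tU) => u Uu su; move: jU; rewrite Uu inE => /eqP ju.
  subst j; have sd : seed E u by rewrite /seed su.
  case: (settle_le sd dj) => t ti tl; exists t => //.
  by rewrite /seed_delay su in tl; rewrite cards1 (leq_trans tl) // leq_addr.
case: (initial_sc_hub no_signed_cycle iU ntU) => q qU hq.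
case: (hub_succ_spec hq) => _ rq; set r := hub_succ E q in rq *.
have rU : r \in U := initial_sc_connect iU rq qU.
have sr : special E r by apply/existsP; exists q; rewrite hq eqxx.
have sd : seed E r by rewrite /seed sr orbT.
case: (sc_walk_lt_card (initial_sc_sc iU) rU jU) => k wk kU.
case: (dist_Some dj) => wj _; case: (dist_le_walk (walk_cat wk wj)) => d' e' le'.
case: (settle_le sd e') => t ti tl; exists t => //.
have -> : beta setT E = 1%N.
  by rewrite /beta; case: ifP => // /forallP /(_ U); rewrite iU (negbTE ntU).
rewrite (leq_trans tl) // /seed_delay (negbTE (special_not_source sr)).
by move: le' kU; move: #|U| => c; lia.
Qed.

Lemma settle_finite i : exists t, settle E i = Some t.
Proof.
by case: (lambda_at_finite i) => dl /settle_le_lambda[t ti _]; exists t.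
Qed.

Lemma arc_pattern_fits i j : arc E j i ->
  fits (dsize E j) (wanted E i j).1 (wanted E i j).2 (forbidden E i j).1 (forbidden E i j).2
       (arc_pattern E i j).
Proof.
move=> ji; apply: choose_patternP.
have signed : pos E j i || neg E j i by rewrite -arcE.
have branching : pos E j i && neg E j i ==> (1 < dout E j)%N.
  by apply/implyP=> /andP[]; apply: both_signs_dout_gt1.
rewrite (dsize_out ji) /forbidden /wanted.
case: (boolP (special E i && (j == hub_of E i))) => [/andP[si /eqP ej]|nsq] /=.
  case: (special_hub_of si) => hq rq; rewrite -ej in hq rq.
  have d2 : (1 < dout E j)%N by case/andP: hq.
  rewrite d2 /= (orient_special si) /hub_fits -ej (dsize_out ji) d2 /=.
  have -> : top E j = (if pos E j i && neg E j i then 2 else 1)%N.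
    by rewrite /top (dsize_out ji) d2 /= hq rq.
  by case: ifP => // /negbT h; move: (fits_hub signed); rewrite (negbTE h).
case: (boolP (~~ seed E i && (j == parent E i))) => [/andP[ns /eqP ej]|nsp] /=.
  case: (settle_finite i) => t ti; rewrite (orient_parent ns ti) /parent_fits -ej (dsize_out ji).
  have zlt : (final E j < branching_size (1 < dout E j)%N)%N.
    by rewrite -(dsize_out ji) out_lt_dsize.
  by case: ifP => // /negbT h; move: (fits_parent zlt signed branching); rewrite (negbTE h).
by case/andP: (fits_unconstrained signed branching) => h1 h2; case: ifP.
Qed.

Lemma switches_arc i j s : arc E j i ->
  switches (dsize E j) (arc_pattern E i j) (orient E i == s) = ((j, i, s) \in E).
Proof.
move/arc_pattern_fits; rewrite /fits /wanted => /and4P[/eqP up /eqP down _ _].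
by case: (orient E i) up down; case: s => /= up down; rewrite ?up ?down.
Qed.

Lemma accepts_forbidden i j v : arc E j i -> (v < dsize E j)%N ->
  (v == (forbidden E i j).1) || (v == (forbidden E i j).2) -> accepts E i j (Posz v) = false.
Proof.
move=> ji vk vz; rewrite /accepts ji /=.
case/and4P: (arc_pattern_fits ji) => _ _ r1 r2.
by case/orP: vz => /eqP vz; apply: rejects_pat_at vk; rewrite vz.
Qed.


Lemma accepts_some i j : exists v, (v < dsize E j)%N && accepts E i j (Posz v).
Proof.
rewrite /accepts; case: (boolP (arc E j i)) => ji; last by exists 0%N; rewrite dsize_gt0.
have [s sji] : exists s, (j, i, s) \in E.
  by move: ji; rewrite arcE => /orP[] h; [exists true|exists false].
move: sji; rewrite -(switches_arc _ ji) => /(switchesP _ _ (dsize_le3 E j)).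
case=> v [vk h1 h2]; case: (boolP (pat_at (arc_pattern E i j) v.+1)) => a.
  by exists v.+1; rewrite vk.
exists v; rewrite (ltn_trans _ vk) //=.
by move: h1 h2; rewrite (negbTE a); case: (orient E i == s); case: (pat_at _ v).
Qed.

Lemma fdsE x i : fds E x i =
  if source E i then 0%R else Posz (out E i (orient E i) [forall j, accepts E i j (x j)]).
Proof. by rewrite ffunE. Qed.

Lemma forall_split (P : pred 'I_n) j :
  [forall j', P j'] = P j && [forall j', (j' != j) ==> P j'].
Proof.
apply/forallP/andP => [h|[h1 /forallP h2] j'].
  by split=> //; apply/forallP=> j'; rewrite h implybT.
by case: (eqVneq j' j) => [->//|ne]; move: (h2 j'); rewrite ne.
Qed.

Lemma accepts_shift x j i : [forall j', accepts E i j' (shift x j j')] =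
  accepts E i j (x j + 1) && [forall j', (j' != j) ==> accepts E i j' (x j')].
Proof.
rewrite (forall_split _ j) /shift ffunE eqxx; congr (_ && _).
apply: eq_forallb => j'; case: (eqVneq j' j) => //= ne.
by rewrite ffunE (negbTE ne) addr0.
Qed.

Lemma out_change i o b' b (s : bool) : (1 < dsize E i)%N ->
  (if s then (0 < Posz (out E i o b') - Posz (out E i o b))%R
   else (Posz (out E i o b') - Posz (out E i o b) < 0)%R) = (b' == (o == s)) && (b != (o == s)).
Proof.
move/top_gt0=> k0; rewrite /out.
case: s; case: o; case: b'; case: b => /=;
  by rewrite ?subrr ?subr0 ?sub0r ?oppr_gt0 ?oppr_lt0 ?ltz_nat ?ltn0 ?k0 ?ltxx.
Qed.

Lemma inX_dsize x : inX lo (hi E) x -> forall i, exists2 v, x i = Posz v & (v < dsize E i)%N.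
Proof.
move/forallP=> h i; move: (h i); rewrite /lo /hi.
by case: (x i) => [v|v] /andP[// _]; rewrite lez_nat -ltnS prednK ?dsize_gt0 //; exists v.
Qed.

(* Moving [x j] from [v] to [v + 1] while every other test passes realises the
   switch of the pattern of [j -> i] at [v]. *)
Lemma arc_realised j i s : (j, i, s) \in E ->
  exists x, [/\ inX lo (hi E) x, (x j < hi E j)%R &
    if s then (0 < fds E (shift x j) i - fds E x i)%R
    else (fds E (shift x j) i - fds E x i < 0)%R].
Proof.
move=> sji; have ji : arc E j i by rewrite arcE; case: s sji => ->; rewrite ?orbT.
have nso : ~~ source E i by apply/negP=> /forallP /(_ j); rewrite ji.
move: sji; rewrite -(switches_arc _ ji) => /(switchesP _ _ (dsize_le3 E j)) [v [vk h1 h2]].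
pose x := [ffun j' => if j' == j then Posz v else Posz (xchoose (accepts_some i j'))].
have others : [forall j', (j' != j) ==> accepts E i j' (x j')].
  apply/forallP=> j'; apply/implyP=> ne; rewrite ffunE (negbTE ne).
  by case/andP: (xchooseP (accepts_some i j')).
exists x; split.
- apply/forallP=> j'; rewrite ffunE.
  case: ifP => [/eqP->|_]; rewrite /lo /hi le0z_nat lez_nat -ltnS prednK ?dsize_gt0 //.
    exact: ltnW.
  by case/andP: (xchooseP (accepts_some i j')).
- by rewrite ffunE eqxx /hi ltz_nat -ltnS prednK ?dsize_gt0.
rewrite !fdsE (negbTE nso) (forall_split (fun j' => accepts E i j' (x j')) j) accepts_shift.
rewrite others !andbT ffunE eqxx [(Posz v + 1)%R]addrC -intS /accepts ji.
by rewrite out_change ?(dsize_in ji) // h1 h2.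
Qed.

Lemma realised_arc j i s x : inX lo (hi E) x -> (x j < hi E j)%R ->
  (if s then (0 < fds E (shift x j) i - fds E x i)%R
   else (fds E (shift x j) i - fds E x i < 0)%R) -> (j, i, s) \in E.
Proof.
move=> xX xj; case: (boolP (source E i)) => [so|nso].
  by rewrite !fdsE so subrr; case: s.
rewrite !fdsE (negbTE nso) (forall_split (fun j' => accepts E i j' (x j')) j) accepts_shift.
case: (inX_dsize xX j) => v xv vk; rewrite xv [(Posz v + 1)%R]addrC -intS.
have vk' : (v.+1 < dsize E j)%N by move: xj; rewrite xv /hi ltz_nat -ltnS prednK ?dsize_gt0.
case: (boolP (arc E j i)) => [ji|nji]; last by rewrite /accepts (negbTE nji) subrr; case: s.
case: [forall j', _] => /=; last by rewrite !andbF subrr; case: s.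
rewrite !andbT /accepts ji out_change ?(dsize_in ji) // => /andP[h1 h2].
rewrite -(switches_arc _ ji); apply/(switchesP _ _ (dsize_le3 E j)).
by exists v.
Qed.

Lemma fds_interaction_graph : interaction_graph_is lo (hi E) (fds E) E.
Proof.
move=> j i s; split; first exact: arc_realised.
by case=> x [xX xj]; apply: realised_arc.
Qed.

Lemma fds_inX x : inX lo (hi E) (fds E x).
Proof.
apply/forallP=> i; rewrite fdsE /lo /hi; case: ifP => _; first by rewrite lexx.
by rewrite le0z_nat lez_nat -ltnS prednK ?dsize_gt0 ?out_lt_dsize.
Qed.

Lemma fds_degree_bounded : degree_bounded lo (hi E) E.
Proof.
move=> i; have -> : (hi E i - lo i + 1 = Posz (dsize E i))%R.
  by rewrite /hi /lo subr0 -[1%R]/(Posz 1) -PoszD addn1 prednK // dsize_gt0.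
rewrite /dsize; move: (dout E i) (din E i) => a b.
by case: a => [|[|a]]; case: b => [|b] //=; rewrite lez_nat.
Qed.

(* Once the watched in-neighbour (the hub for a special vertex, the parent otherwise)
   shows a forbidden value, the test of [i] fails and [i] outputs [final i]. *)
Lemma fds_settles x N i t m : settle E i = Some t -> (t <= N)%N -> (t <= m)%N ->
  iter m (fds E) x i = Posz (final E i).
Proof.
elim: N i t m => [|N IH] i t m ti tN tm; first by move: (settle_gt0 ti); rewrite leqNgt ltnS tN.
case: m tm => [|m] tm; first by move: (leq_trans (settle_gt0 ti) tm).
rewrite iterS fdsE; case: ifP => [so|/negbT nso]; first by rewrite /final orient_source.
suff [j ji blocked] : exists2 j, arc E j i & ~~ accepts E i j (iter m (fds E) x j).
  by rewrite /final (forall_split _ j) (negbTE blocked).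
case: (boolP (special E i)) => [si|nsi].
  case: (special_hub_of si) => hq _; exists (hub_of E i); first exact: hub_of_arc.
  case: m tm => [|m] tm; first by move: (leq_trans (settle_special si ti) tm).
  rewrite iterS fdsE (negbTE (hub_not_source hq)) accepts_forbidden ?out_lt_dsize
    ?hub_of_arc //.
  by rewrite /forbidden si eqxx /= /out; case: ifP => _; rewrite eqxx ?orbT.
have ns : ~~ seed E i by rewrite /seed (negbTE nso) (negbTE nsi).
case: (parent_spec ns ti) => pi [tp ep ltp]; exists (parent E i) => //.
rewrite (IH _ _ m ep) ?accepts_forbidden ?out_lt_dsize //.
- by rewrite /forbidden (negbTE nsi) ns eqxx /= eqxx.
- by rewrite -ltnS (leq_trans ltp).
- by rewrite -ltnS (leq_trans ltp).
Qed.

Lemma fds_constant_after_lambda L : lambda setT E = Some L ->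
  forall x, iter (L + beta setT E) (fds E) x = [ffun i => Posz (final E i)].
Proof.
move=> eL x; apply/ffunP=> i; rewrite ffunE.
case: (lambda_at_finite i) => dl edl; case: (settle_le_lambda edl) => t ti tle.
case: (big_omax_Some_le eL (in_setT i)) => v; rewrite -/(lambda_at _ _ _) edl => -[<-] vL.
by apply: (fds_settles x ti (leqnn t)); rewrite (leq_trans tle) // leq_add2r.
Qed.

End Realisation.

Theorem mainTheorem8 (n : nat) (E : arcset n) :
  (forall W, W \in components E -> ~ signed_cycle W E) ->
  lambda setT E = \big[@omax/Some 0%N]_(W in components E) lambda W E /\
  beta setT E = (\max_(W in components E) beta W E)%N /\
  exists L : nat, lambda setT E = Some L /\
    exists (lo hi : 'I_n -> int) (f : {ffun 'I_n -> int} -> {ffun 'I_n -> int}),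
      [/\ (forall i, (lo i <= hi i)%R),
          (forall x, inX lo hi x -> inX lo hi (f x)),
          interaction_graph_is lo hi f E,
          degree_bounded lo hi E &
          exists c, forall x, inX lo hi x -> iter (L + beta setT E) f x = c].
Proof.
move=> nc; split; first exact: lambda_components.
split; first exact: beta_components.
have [L eL] : exists L, lambda setT E = Some L.
  by apply: big_omax_Some => i _; apply: lambda_at_finite.
exists L; split=> //; exists lo, (hi E), (fds E); split.
- by move=> i; rewrite /lo /hi le0z_nat.
- by move=> x _; apply: fds_inX.
- exact: fds_interaction_graph.
- exact: fds_degree_bounded.
- by exists [ffun i => Posz (final E i)] => x _; apply: fds_constant_after_lambda.
Qed.
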